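(* Let $g:\mathbb{R}^d\to\mathbb{C}$ be a function and let $A$ be a real invertible $d\times d$ matrix. Then: (i) If the series $\sum_{j=-\infty}^{\infty} g(A^j\gamma)$ converges for every $\gamma\in\mathbb{R}^d\setminus\{0\}$, then there exists a function $\varphi:\mathbb{R}^d\to\mathbb{C}$ such that $$g(\gamma)=\varphi(\gamma)-\varphi(A\gamma)\quad\text{for all }\gamma\in\mathbb{R}^d\setminus\{0\}. \qquad ( * )$$ (ii) Conversely, let $\varphi:\mathbb{R}^d\to\mathbb{C}$ be any function such that $( * )$ holds. Then for each fixed $\gamma\in\mathbb{R}^d\setminus\{0\}$, the series $\sum_{j=-\infty}^{\infty} g(A^j\gamma)$ converges if and only if both limits $\lim_{N\to\infty}\varphi(A^N\gamma)$ and $\lim_{N\to-\infty}\varphi(A^N\gamma)$ exist. (iii) Let $\varphi:\mathbb{R}^d\to\mathbb{C}$ be any function such that $( * )$ holds. Then $$\sum_{j=-\infty}^{\infty} g(A^j\gamma)=1\quad\text{for all }\gamma\in\mathbb{R}^d\setminus\{0\}$$ holds if and only if, for every $\gamma\in\mathbb{R}^d\setminus\{0\}$, both limits $\lim_{N\to\pm\infty}\varphi(A^N\gamma)$ exist and $$\lim_{N\to-\infty}\varphi(A^N\gamma)-\lim_{N\to\infty}\varphi(A^N\gamma)=1.$$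
   Context: Convergence of a bilateral series $\sum_{j=-\infty}^\infty a_j$ means that the partial sums $\sum_{j=-M}^{N} a_j$ converge as $M,N\to\infty$ (independently). *)

From HB Require Import structures.
From mathcomp Require Import all_boot all_order all_algebra.
From mathcomp Require Import all_classical all_reals all_analysis.
From mathcomp Require Import complex.
Import Order.TTheory GRing.Theory Num.Theory numFieldNormedType.Exports.
Set Implicit Arguments. Unset Strict Implicit. Unset Printing Implicit Defensive.
Local Open Scope classical_set_scope.
Local Open Scope ring_scope.

(* The complex numbers over the real field R, as a numClosedFieldType so that
   the (modulus-)norm topology of MathComp-Analysis applies. *)
Definition Cpx (R : realType) : numClosedFieldType := R[i].

(* A^j *m gamma for an integer exponent j (A^(-n) := (A^-1)^n, with invmx A the
   genuine inverse of A when A is invertible). *)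
Definition mxzact (R : realType) (d : nat) (A : 'M[R]_d) (j : int) (v : 'cV[R]_d)
  : 'cV[R]_d :=
  match j with
  | Posz n => iter n (mulmx A) v
  | Negz n => iter n.+1 (mulmx (invmx A)) v
  end.

Definition bpsum (T : zmodType) (a : int -> T) (M N : nat) : T :=
  \sum_(0 <= k < (M + N).+1) a (k%:Z - M%:Z).

(* The bilateral series \sum_{j in Z} a_j converges to l: the partial sums
   \sum_{j=-M}^{N} a_j tend to l as M, N -> oo independently. *)
Definition bseries_cvg_to (R : realType) (a : int -> Cpx R) (l : Cpx R) : Prop :=
  (fun MN : nat * nat => bpsum a MN.1 MN.2) @ filter_prod \oo \oo --> l.

Definition bseries_cvg (R : realType) (a : int -> Cpx R) : Prop :=
  exists l : Cpx R, bseries_cvg_to a l.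

(* If g = phi - phi o A away from 0, the bilateral partial sums along an orbit telescope:
   sum_{j=-M}^{N} g (A^j gamma) = phi (A^-M gamma) - phi (A^(N+1) gamma).
   A sequence u M + v N converges as M, N -> oo independently iff u and v both converge
   (for "only if", u and v are Cauchy, and C is complete); this gives (ii) and (iii).
   For (i), the same splitting shows that the one-sided series
   phi gamma := sum_{k >= 0} g (A^k gamma) converges, and peeling off its first term gives
   phi gamma = g gamma + phi (A gamma). *)

From HB Require Import structures.
From mathcomp Require Import all_boot all_order all_algebra.
From mathcomp Require Import all_classical all_reals all_analysis.
From mathcomp Require Import complex.
From mathcomp Require Import zify.
Import Order.TTheory GRing.Theory Num.Theory numFieldNormedType.Exports.
Local Open Scope classical_set_scope.
Local Open Scope ring_scope.

Section ComplexComplete.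
Context {R : realType}.
Local Notation C := (Cpx R).
Local Open Scope complex_scope.
Local Notation Re := (@complex.Re R).
Local Notation Im := (@complex.Im R).

Lemma normc_le_ReIm (z : C) : `|z| <= (`|Re z| + `|Im z|)%:C.
Proof.
case: z => x y; rewrite normc_def lecR /=.
rewrite -(@ger0_norm _ (`|x| + `|y|)) ?addr_ge0 // -(sqrtr_sqr (`|x| + `|y|)).
rewrite ler_sqrt ?sqr_ge0 //.
rewrite sqrrD -[x ^+ 2]real_normK ?num_real // -[y ^+ 2]real_normK ?num_real //.
by rewrite -addrA lerD2l lerDr mulrn_wge0 // mulr_ge0.
Qed.

Lemma normc_ge_Im (z : C) : `|Im z|%:C <= `|z|.
Proof.
case: z => x y; rewrite normc_def lecR /= -sqrtr_sqr.
by apply: ler_wsqrtr; rewrite lerDr sqr_ge0.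
Qed.

Lemma cauchy_Re (F : set_system C) : Filter F -> cauchy F -> cauchy (Re @ F).
Proof.
move=> FF /cauchy_ballP cF; apply/cauchy_ballP => e e0; rewrite near_map2.
have : 0 < e%:C :> C by rewrite ltcR.
move/cF; apply: filterS => -[x y]; rewrite -!ball_normE /= => xy.
rewrite -ltcR; apply: le_lt_trans xy; case: x y => [a b] [c d].
exact: (normc_ge_Re ((a - c) +i* (b - d))).
Qed.

Lemma cauchy_Im (F : set_system C) : Filter F -> cauchy F -> cauchy (Im @ F).
Proof.
move=> FF /cauchy_ballP cF; apply/cauchy_ballP => e e0; rewrite near_map2.
have : 0 < e%:C :> C by rewrite ltcR.
move/cF; apply: filterS => -[x y]; rewrite -!ball_normE /= => xy.
rewrite -ltcR; apply: le_lt_trans xy; case: x y => [a b] [c d].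
exact: (normc_ge_Im ((a - c) +i* (b - d))).
Qed.

Lemma cvgC_ReIm (F : set_system C) (a b : R) : Filter F ->
  Re @ F --> a -> Im @ F --> b -> F --> (a +i* b : C).
Proof.
move=> FF /cvgrPdist_lt Ra /cvgrPdist_lt Ib; apply/cvgrPdist_lt => eps eps0.
have := RRe_real (gtr0_real eps0); set e := Re eps => <-.
have e0 : 0 < e by rewrite -ltcR RRe_real ?gtr0_real.
have e20 : 0 < e / 2 by rewrite divr_gt0.
near=> z; apply: le_lt_trans (normc_le_ReIm _) _.
have -> : Re ((a +i* b : C) - z) = a - Re z by case: (z).
have -> : Im ((a +i* b : C) - z) = b - Im z by case: (z).
rewrite ltcR (splitr e); apply: ltrD; [near: z; exact: Ra | near: z; exact: Ib].
Unshelve. all: by end_near.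
Qed.

Lemma cauchy_cvgC {F : set_system C} {FF : ProperFilter F} : cauchy F -> cvg F.
Proof.
move=> cF; apply/cvg_ex; exists (lim (Re @ F) +i* lim (Im @ F) : C).
by apply: cvgC_ReIm; apply/cauchy_cvgP; [exact: cauchy_Re | exact: cauchy_Im].
Qed.

End ComplexComplete.

Section NormedModule.
Context {K : numFieldType} {V : normedModType K}.

Lemma cvg_prod_add_cauchy {T U : Type} {F : set_system T} {G : set_system U}
    {FF : ProperFilter F} {FG : ProperFilter G} {u : T -> V} {v : U -> V} {l : V} :
  (fun xy => u xy.1 + v xy.2) @ filter_prod F G --> l ->
  cauchy (u @ F) /\ cauchy (v @ G).
Proof.
move=> /cvgrPdist_lt ul.
have near_l e : 0 < e -> exists2 PQ : set T * set U, F PQ.1 /\ G PQ.2 &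
    forall x y, PQ.1 x -> PQ.2 y -> ball l (e / 2) (u x + v y).
  move=> e0; have /ul[[P Q] [FP GQ] sub] : 0 < e / 2 by rewrite divr_gt0.
  by exists (P, Q) => // x y Px Qy; rewrite -ball_normE; apply: (sub (x, y)).
split; apply/cauchy_ballP => e /near_l[[P Q] /= [FP GQ] lPQ]; rewrite near_map2.
- have [y Qy] := filter_ex GQ; exists (P, P) => // -[x x'] [/= Px Px'].
  have := ball_split (ball_sym (lPQ x y Px Qy)) (lPQ x' y Px' Qy).
  by rewrite -!ball_normE /= [u x' + _]addrC addrKA.
- have [x Px] := filter_ex FP; exists (Q, Q) => // -[y y'] [/= Qy Qy'].
  have := ball_split (ball_sym (lPQ x y Px Qy)) (lPQ x y' Px Qy').
  by rewrite -!ball_normE /= [u x + v y]addrC addrKA.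
Qed.

Lemma is_cvg_shiftS (w : nat -> V) : cvgn (fun n => w n.+1) = cvgn w.
Proof.
rewrite propeqE; split=> /cvg_ex[l wl]; apply/cvg_ex; exists l.
  by rewrite -cvg_shiftS.
by rewrite cvg_shiftS.
Qed.

Lemma is_cvg_oppS (w : nat -> V) : cvgn (fun n => - w n.+1) = cvgn w.
Proof. by rewrite -is_cvg_shiftS -(is_cvgNE (fun n => w n.+1)). Qed.

Lemma lim_oppS (w : nat -> V) : cvgn w -> limn (fun n => - w n.+1) = - limn w.
Proof.
move=> cw; apply: cvg_lim => //; apply: cvgN; rewrite cvg_shiftS; exact: cw.
Qed.

Lemma iter_series_coboundary {X : Type} (f : X -> X) (S : set X) (g : X -> V) :
  (forall x, S x -> S (f x)) ->
  (forall x, S x -> cvgn (series (fun k => g (iter k f x)))) ->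
  forall x, S x ->
    g x = limn (series (fun k => g (iter k f x)))
          - limn (series (fun k => g (iter k f (f x)))).
Proof.
move=> Sf cvg_orbit x Sx.
have seriesS n : series (fun k => g (iter k f x)) n.+1 =
    g x + series (fun k => g (iter k f (f x))) n.
  by rewrite /series /= big_nat_recl //; under eq_bigr do rewrite iterSr.
have : series (fun k => g (iter k f x)) @ \oo -->
    g x + limn (series (fun k => g (iter k f (f x)))).
  rewrite -cvg_shiftS /=; under eq_fun do rewrite seriesS.
  exact: cvgD (cvg_cst _) (cvg_orbit _ (Sf _ Sx)).
by move/cvg_lim => -> //; rewrite addrK.
Qed.
End NormedModule.

Lemma bpsum_split (T : zmodType) (a : int -> T) (M N : nat) :
  bpsum a M N = series (fun k => a (- k.+1%:Z)) M + series (fun k => a k%:Z) N.+1.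
Proof.
rewrite /bpsum (@big_cat_nat _ _ _ M) //; last by rewrite leqW ?leq_addr.
congr (_ + _).
  rewrite big_nat_rev /= add0n; apply: eq_big_nat => k /andP[_ kM].
  by congr a; rewrite -(subzn kM) addrAC subrr add0r.
rewrite -{1}(add0n M) big_addn (_ : (M + N).+1 - M = N.+1)%N; last by lia.
by apply: eq_big_nat => k _; congr a; rewrite PoszD addrK.
Qed.

Lemma bpsum_telescope {T : zmodType} {a b : int -> T} :
  (forall j, a j = b j - b (j + 1)) ->
  forall M N, bpsum a M N = b (- M%:Z) - b N.+1%:Z.
Proof.
move=> ab M N; rewrite /bpsum (@telescope_sumr_eq _ _ _ (fun k => - b (k%:Z - M%:Z))) //.
  by rewrite sub0r opprK addrC; congr (_ - b _); lia.
by move=> k _; rewrite ab opprK addrC -addn1 PoszD addrAC.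
Qed.

Section BilateralSeries.
Context {R : realType}.
Local Notation C := (Cpx R).

Lemma cvg_prod_addP (u v : nat -> C) (l : C) :
  (fun MN : nat * nat => u MN.1 + v MN.2) @ filter_prod \oo \oo --> l <->
  [/\ cvgn u, cvgn v & l = limn u + limn v].
Proof.
have join : cvgn u -> cvgn v ->
    (fun MN : nat * nat => u MN.1 + v MN.2) @ filter_prod \oo \oo --> limn u + limn v.
  by move=> cu cv; apply: cvgD; [exact: cvg_comp cvg_fst cu | exact: cvg_comp cvg_snd cv].
split=> [ul | [cu cv ->]]; last exact: join.
have [/cauchy_cvgC cu /cauchy_cvgC cv] := cvg_prod_add_cauchy ul.
split; [exact: cu | exact: cv |].
rewrite -(cvg_lim (@norm_hausdorff _ C) ul).
by apply: (cvg_lim (@norm_hausdorff _ C)); exact: (join cu cv).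
Qed.

Lemma bseries_cvg_series {a : int -> C} :
  bseries_cvg a -> cvgn (series (fun k => a k%:Z)).
Proof.
case=> l; rewrite /bseries_cvg_to.
under eq_fun do rewrite bpsum_split.
case/(cvg_prod_addP _ (fun N => series (fun k => a k%:Z) N.+1)) => _ + _.
by rewrite is_cvg_shiftS.
Qed.

Lemma bseries_coboundary_cvg_toP {a b : int -> C} (l : C) :
  (forall j, a j = b j - b (j + 1)) ->
  bseries_cvg_to a l <->
  [/\ cvgn (fun N : nat => b N%:Z), cvgn (fun N : nat => b (- N%:Z))
    & l = limn (fun N : nat => b (- N%:Z)) - limn (fun N : nat => b N%:Z)].
Proof.
move=> ab; rewrite /bseries_cvg_to.
under eq_fun do rewrite (bpsum_telescope ab).
rewrite (cvg_prod_addP (fun M : nat => b (- M%:Z)) (fun N : nat => - b N.+1%:Z)).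
rewrite (is_cvg_oppS (fun N : nat => b N%:Z)).
split=> [[cn cp ->] | [cp cn ->]].
  by split; [exact: cp | exact: cn | rewrite (lim_oppS _ cp)].
by split; [exact: cn | exact: cp | rewrite (lim_oppS _ cp)].
Qed.

Lemma bseries_coboundary_cvgP {a b : int -> C} :
  (forall j, a j = b j - b (j + 1)) ->
  bseries_cvg a <-> cvgn (fun N : nat => b N%:Z) /\ cvgn (fun N : nat => b (- N%:Z)).
Proof.
move=> ab; split=> [[l /(bseries_coboundary_cvg_toP _ ab)[cp cn _]] | [cp cn]].
  by split.
by eexists; apply/(bseries_coboundary_cvg_toP _ ab).
Qed.

End BilateralSeries.

Section MatrixOrbit.
Context {R : realType} {d : nat} {A : 'M[R]_d}.
Hypothesis unitA : A \in unitmx.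

Lemma unitmx_mul_eq0 (B : 'M[R]_d) (v : 'cV[R]_d) :
  B \in unitmx -> (B *m v == 0) = (v == 0).
Proof.
move=> unitB; apply/eqP/eqP => [Bv0 | ->]; last by rewrite mulmx0.
by rewrite -(mulKmx unitB v) Bv0 mulmx0.
Qed.

Lemma mxzact_eq0 (j : int) (v : 'cV[R]_d) : (mxzact A j v == 0) = (v == 0).
Proof.
have iter_eq0 B n : B \in unitmx -> (iter n (mulmx B) v == 0) = (v == 0).
  by move=> unitB; elim: n => //= n <-; rewrite unitmx_mul_eq0.
by case: j => n; [exact: iter_eq0 | apply: iter_eq0; rewrite unitmx_inv].
Qed.

Lemma mulmx_mxzact (j : int) (v : 'cV[R]_d) : A *m mxzact A j v = mxzact A (j + 1) v.
Proof.
case: j => [n | [|n]] /=; first by rewrite addn1.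
  by rewrite mulKVmx.
by rewrite mulKVmx // subn1.
Qed.

Lemma mxzact_coboundary {g phi : 'cV[R]_d -> Cpx R} {v : 'cV[R]_d} :
  (forall w, w != 0 -> g w = phi w - phi (A *m w)) -> v != 0 ->
  forall j, g (mxzact A j v) = phi (mxzact A j v) - phi (mxzact A (j + 1) v).
Proof. by move=> gE v0 j; rewrite gE ?mxzact_eq0 // mulmx_mxzact. Qed.

End MatrixOrbit.

Theorem theorem2p1 (R : realType) (d : nat) (g : 'cV[R]_d -> Cpx R)
  (A : 'M[R]_d) (hA : A \in unitmx) :
  (* (i) *)
  ((forall gamma : 'cV[R]_d, gamma != 0 ->
      bseries_cvg (fun j : int => g (mxzact A j gamma))) ->
   exists phi : 'cV[R]_d -> Cpx R,
     forall gamma : 'cV[R]_d, gamma != 0 -> g gamma = phi gamma - phi (A *m gamma))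
  /\
  (* (ii) *)
  (forall phi : 'cV[R]_d -> Cpx R,
     (forall gamma : 'cV[R]_d, gamma != 0 -> g gamma = phi gamma - phi (A *m gamma)) ->
     forall gamma : 'cV[R]_d, gamma != 0 ->
       (bseries_cvg (fun j : int => g (mxzact A j gamma)) <->
        (cvgn (fun N : nat => phi (mxzact A N%:Z gamma)) /\
         cvgn (fun N : nat => phi (mxzact A (- N%:Z) gamma)))))
  /\
  (* (iii) *)
  (forall phi : 'cV[R]_d -> Cpx R,
     (forall gamma : 'cV[R]_d, gamma != 0 -> g gamma = phi gamma - phi (A *m gamma)) ->
     ((forall gamma : 'cV[R]_d, gamma != 0 ->
         bseries_cvg_to (fun j : int => g (mxzact A j gamma)) 1) <->
      (forall gamma : 'cV[R]_d, gamma != 0 ->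
         cvgn (fun N : nat => phi (mxzact A N%:Z gamma)) /\
         cvgn (fun N : nat => phi (mxzact A (- N%:Z) gamma)) /\
         limn (fun N : nat => phi (mxzact A (- N%:Z) gamma))
           - limn (fun N : nat => phi (mxzact A N%:Z gamma)) = 1))).
Proof.
split; [|split].
- move=> bcvg; exists (fun v => limn (series (fun k => g (iter k (mulmx A) v)))).
  apply: (iter_series_coboundary (mulmx A) [set v | v != 0]) => [v | v v0].
    by rewrite /= unitmx_mul_eq0.
  exact: bseries_cvg_series (bcvg v v0).
- move=> phi gE gamma g0.
  exact: bseries_coboundary_cvgP (mxzact_coboundary hA gE g0).
- move=> phi gE; split=> bcvg gamma g0.
    have cob := mxzact_coboundary hA gE g0.
    by case/(bseries_coboundary_cvg_toP _ cob): (bcvg _ g0) => cp cn ->.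
  have [cp [cn E]] := bcvg _ g0.
  apply/(bseries_coboundary_cvg_toP _ (mxzact_coboundary hA gE g0)).
  by split; [exact: cp | exact: cn | rewrite E].
Qed.
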